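(* Let $M$ be a finite monoid. Then the following are equivalent: (a) $M$ is a group; (b) $M$ is strongly sofic; (c) $M$ has no non-trivial idempotents (no $e\in M$ with $e^2=e\ne1_M$).
   Context: Hamming metric on $\operatorname{Map}(D)$ (monoid of maps $D\to D$, $D$ finite non-empty): $d_D^{\mathrm{Ham}}(f,g)=\frac{1}{|D|}|\{v:f(v)\ne g(v)\}|$. A monoid $M$ is strongly sofic if for every finite $K\subset M$ there is an integer $\Delta_K\ge1$ such that for every $\varepsilon>0$ there exist a non-empty finite set $D$ and a map $\sigma\colon M\to\operatorname{Map}(D)$ with (1) $\sigma(1_M)=\mathrm{Id}_D$; (2) $d_D^{\mathrm{Ham}}(\sigma(k_1k_2),\sigma(k_1)\sigma(k_2))\le\varepsilon$ for $k_1,k_2\in K$; (3) $d_D^{\mathrm{Ham}}(\sigma(k_1),\sigma(k_2))\ge1-\varepsilon$ for distinct $k_1,k_2\in K$; (4) $|\sigma(k)^{-1}(v)|\le\Delta_K$ for $k\in K$, $v\in D$. *)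

From mathcomp Require Import all_boot all_order all_algebra.
From mathcomp Require Import reals.
Set Implicit Arguments. Unset Strict Implicit. Unset Printing Implicit Defensive.
Import Order.TTheory GRing.Theory Num.Theory.
Local Open Scope ring_scope.

Definition is_monoid (M : Type) (mul : M -> M -> M) (one : M) : Prop :=
  [/\ forall x y z, mul x (mul y z) = mul (mul x y) z,
      forall x, mul one x = x & forall x, mul x one = x].

Definition monoid_is_group (M : Type) (mul : M -> M -> M) (one : M) : Prop :=
  forall x, exists y, mul x y = one /\ mul y x = one.

Definition no_nontrivial_idempotent (M : Type) (mul : M -> M -> M) (one : M)
  : Prop := forall e, mul e e = e -> e = one.

Definition hamming (R : realType) (D : finType) (f g : D -> D) : R :=
  #|[set v : D | f v != g v]|%:R / #|D|%:R.

Definition strongly_sofic (R : realType) (M : finType)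
  (mul : M -> M -> M) (one : M) : Prop :=
  forall K : {set M}, exists Delta : nat, (1 <= Delta)%N /\
    forall eps : R, 0 < eps ->
    exists (D : finType) (sigma : M -> D -> D),
      [/\ (0 < #|D|)%N,
          sigma one = id,
          (forall k1 k2, k1 \in K -> k2 \in K ->
             hamming R (sigma (mul k1 k2)) (sigma k1 \o sigma k2) <= eps),
          (forall k1 k2, k1 \in K -> k2 \in K -> k1 != k2 ->
             1 - eps <= hamming R (sigma k1) (sigma k2)) &
          (forall k v, k \in K -> (#|[set u : D | sigma k u == v]| <= Delta)%N)].

(** In a finite monoid some positive power [x ^ m] of every [x] is idempotent,
    so without non-trivial idempotents [x ^ m = 1] and [x] is invertible.  A
    group is strongly sofic through its left regular action on itself.
    Conversely, let [e] be an idempotent of a strongly sofic monoid with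
    [e <> 1] and [s = sigma e].  A point [v] with [s v = s (s v)] is mapped by
    [s] to a fixed point of [s], so the bound on fibres gives
    [|D| <= |{v | s v <> s (s v)}| + Delta |Fix s|].  Almost
    multiplicativity makes the first term at most [eps |D|]; separation from
    [sigma 1 = id] makes [|Fix s| <= eps |D|]; this fails for
    [eps = 1 / (Delta + 2)]. *)

From mathcomp Require Import all_boot all_order all_algebra.
From mathcomp Require Import reals boolp.
From mathcomp Require Import zify.
Import Order.TTheory GRing.Theory Num.Theory.

Set Implicit Arguments.
Unset Strict Implicit.
Unset Printing Implicit Defensive.

Section Monoid.
Variables (M : Type) (mul : M -> M -> M) (one : M).
Hypothesis monoidM : is_monoid mul one.

Definition mpow (x : M) (n : nat) : M := iter n (mul x) one.

Lemma mpowD x m n : mpow x (m + n) = mul (mpow x m) (mpow x n).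
Proof.
case: monoidM => mulA mul1x _.
elim: m => [|m IHm]; first by rewrite add0n /mpow /= mul1x.
by rewrite addSn /mpow !iterS -!/(mpow x _) IHm mulA.
Qed.

Lemma mpow1 x : mpow x 1 = x.
Proof. by case: monoidM => _ _ mulx1; rewrite /mpow /= mulx1. Qed.

Lemma mpow_periodic x i p :
  mpow x i = mpow x (i + p) -> forall n q, (i <= n)%N -> mpow x (n + q * p) = mpow x n.
Proof.
move=> per n q le_in; elim: q => [|q IHq]; first by rewrite mul0n addn0.
have -> : (n + q.+1 * p = (n + q * p - i) + (i + p))%N by lia.
by rewrite mpowD -per -mpowD subnK // (leq_trans le_in (leq_addr _ _)).
Qed.

Lemma group_mulgI x : monoid_is_group mul one -> injective (mul x).
Proof.
case: monoidM => mulA mul1x _ invM u w xu_xw.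
have [y [_ yx]] := invM x.
by rewrite -(mul1x u) -(mul1x w) -yx -!mulA xu_xw.
Qed.

Lemma group_mulIg x : monoid_is_group mul one -> injective (mul^~ x).
Proof.
case: monoidM => mulA _ mulx1 invM u w ux_wx.
have [y [xy _]] := invM x.
by rewrite -(mulx1 u) -(mulx1 w) -xy !mulA ux_wx.
Qed.

Lemma mpow_inverse x m : (0 < m)%N -> mpow x m = one ->
  mul x (mpow x m.-1) = one /\ mul (mpow x m.-1) x = one.
Proof.
move=> m_gt0 xm1.
by rewrite -{1}(mpow1 x) -{4}(mpow1 x) -!mpowD add1n addn1 prednK.
Qed.

End Monoid.

Section FiniteMonoid.
Variables (M : finType) (mul : M -> M -> M) (one : M).
Hypothesis monoidM : is_monoid mul one.

Lemma exists_mpow_period x :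
  exists i p, (0 < p)%N /\ mpow mul one x i = mpow mul one x (i + p).
Proof.
pose f (k : 'I_#|M|.+1) := mpow mul one x k.
have /injectivePn [i [j neq_ij fij]] : ~~ injectiveb f.
  by apply/negP => /injectiveP/leq_card; rewrite card_ord ltnn.
case: (ltngtP i j) => [lt_ij | lt_ji | eq_ij].
- by exists i, (j - i)%N; rewrite subn_gt0 subnKC ?(ltnW lt_ij).
- by exists j, (i - j)%N; rewrite subn_gt0 subnKC ?(ltnW lt_ji).
- by rewrite (val_inj eq_ij) eqxx in neq_ij.
Qed.

Lemma exists_idempotent_mpow x :
  exists2 m, (0 < m)%N & mul (mpow mul one x m) (mpow mul one x m) = mpow mul one x m.
Proof.
have [i [p [p_gt0 per]]] := exists_mpow_period x.
exists (i.+1 * p)%N; first by rewrite muln_gt0.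
by rewrite -mpowD // (mpow_periodic monoidM per) //; nia.
Qed.

Lemma no_nontrivial_idempotent_group :
  no_nontrivial_idempotent mul one -> monoid_is_group mul one.
Proof.
move=> noidem x; have [m m_gt0 /noidem xm1] := exists_idempotent_mpow x.
by exists (mpow mul one x m.-1); apply: mpow_inverse.
Qed.

End FiniteMonoid.

Section Hamming.
Variables (R : realType) (D : finType).
Local Open Scope ring_scope.

Lemma hamming_eq0 (f g : D -> D) : f =1 g -> hamming R f g = 0.
Proof.
move=> eq_fg; rewrite /hamming (_ : [set v | f v != g v] = set0) ?cards0 ?mul0r //.
by apply/setP => v; rewrite !inE eq_fg eqxx.
Qed.

Lemma hamming_eq1 (f g : D -> D) :
  (0 < #|D|)%N -> (forall v, f v != g v) -> hamming R f g = 1.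
Proof.
move=> D_gt0 neq_fg; rewrite /hamming (_ : [set v | f v != g v] = setT).
  by rewrite cardsT divff // pnatr_eq0 -lt0n.
by apply/setP => v; rewrite !inE neq_fg.
Qed.

Lemma card_preimset_le (s : D -> D) (Delta : nat) (X : {set D}) :
  (forall v, #|[set u | s u == v]| <= Delta)%N -> (#|s @^-1: X| <= #|X| * Delta)%N.
Proof.
move=> fibreD.
rewrite -sum1_card (partition_big s (mem X)) => [|u]; last by rewrite inE.
rewrite -sum_nat_const leq_sum // => v _; rewrite sum1_card.
by apply: leq_trans (fibreD v); apply/subset_leq_card/subsetP => u; rewrite !inE => /andP[].
Qed.

Lemma card_le_nonidempotent_fixpoints (s : D -> D) (Delta : nat) :
  (forall v, #|[set u | s u == v]| <= Delta)%N ->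
  (#|D| <= #|[set v | s v != s (s v)]| + #|[set v | v == s v]| * Delta)%N.
Proof.
move=> fibreD; set Fix := [set v | v == s v].
have coverD : [set: D] \subset [set v | s v != s (s v)] :|: s @^-1: Fix.
  by apply/subsetP => v _; rewrite !inE orNb.
rewrite -cardsT (leq_trans (subset_leq_card coverD)) // (leq_trans (leq_card_setU _ _)) //.
by rewrite leq_add2l card_preimset_le.
Qed.

Lemma hamming_square_id_bound (s : D -> D) (Delta : nat) :
  (0 < #|D|)%N -> (forall v, #|[set u | s u == v]| <= Delta)%N ->
  1 <= hamming R s (s \o s) + Delta%:R * (1 - hamming R id s).
Proof.
move=> D_gt0 fibreD; have nD_gt0 : (0 : R) < #|D|%:R by rewrite ltr0n.
have -> : 1 - hamming R id s = #|[set v | v == s v]|%:R / #|D|%:R.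
  rewrite /hamming -{1}(divff (lt0r_neq0 nD_gt0)) -mulrBl -natrB ?max_card //.
  rewrite -(cardsC [set v | v == s v]) (_ : ~: _ = [set v | id v != s v]) ?addnK //.
  by apply/setP => v; rewrite !inE.
rewrite /hamming mulrA -mulrDl ler_pdivlMr // mul1r -natrM -natrD ler_nat mulnC.
exact: card_le_nonidempotent_fixpoints.
Qed.

End Hamming.

Section StronglySofic.
Variables (R : realType) (M : finType) (mul : M -> M -> M) (one : M).
Local Open Scope ring_scope.

Lemma group_strongly_sofic :
  is_monoid mul one -> monoid_is_group mul one -> strongly_sofic R mul one.
Proof.
move=> monoidM groupM K; have [mulA mul1x _] := monoidM.
exists 1%N; split => // eps eps_gt0; exists M, mul; split.
- by apply/card_gt0P; exists one.
- by apply: funext => x; exact: mul1x.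
- by move=> k1 k2 _ _; rewrite hamming_eq0 ?ltW // => v; rewrite /= mulA.
- move=> k1 k2 _ _ neq_k; rewrite hamming_eq1; last first.
  + by move=> v; apply: contra neq_k => /eqP/(group_mulIg monoidM groupM)->.
  + by apply/card_gt0P; exists one.
  by rewrite lerBlDr lerDl ltW.
- move=> k v _; apply/card_le1_eqP => u w; rewrite !inE => /eqP ku /eqP kw.
  by apply: (group_mulgI monoidM groupM (x := k)); rewrite ku kw.
Qed.

Lemma strongly_sofic_no_nontrivial_idempotent :
  strongly_sofic R mul one -> no_nontrivial_idempotent mul one.
Proof.
move=> soficM e ee; apply/eqP; apply: contraT; rewrite eq_sym => neq_1e.
have [Delta [_ soficK]] := soficM [set one; e].
pose eps : R := (Delta.+2)%:R^-1.
have eps_gt0 : 0 < eps by rewrite invr_gt0 ltr0n.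
have [D [sigma [D_gt0 sigma1 almost_mul separated fibres]]] := soficK eps eps_gt0.
have oneK : one \in [set one; e] by rewrite !inE eqxx.
have eK : e \in [set one; e] by rewrite !inE eqxx orbT.
have square_close := almost_mul e e eK eK; rewrite ee in square_close.
have id_far := separated one e oneK eK neq_1e; rewrite sigma1 in id_far.
have fix_small : 1 - hamming R id (sigma e) <= eps by rewrite lerBlDr addrC -lerBlDr.
have eps_large : 1 <= eps + Delta%:R * eps.
  apply: le_trans (hamming_square_id_bound R D_gt0 (fun v => fibres e v eK)) _.
  by rewrite lerD // ler_wpM2l.
have eps_small : eps + Delta%:R * eps < 1.
  rewrite -[X in X + _]mul1r -mulrDl addrC natr1 ltr_pdivrMr ?ltr0n //.
  by rewrite mul1r ltr_nat.
by rewrite ltNge eps_large in eps_small.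
Qed.

End StronglySofic.

Theorem corollary3p17 (R : realType) (M : finType) (mul : M -> M -> M) (one : M) :
  is_monoid mul one ->
  (monoid_is_group mul one <-> strongly_sofic R mul one) /\
  (strongly_sofic R mul one <-> no_nontrivial_idempotent mul one).
Proof.
move=> monoidM.
have sofic_group : strongly_sofic R mul one -> monoid_is_group mul one.
  by move/strongly_sofic_no_nontrivial_idempotent/(no_nontrivial_idempotent_group monoidM).
split; split.
- exact: group_strongly_sofic.
- exact: sofic_group.
- exact: strongly_sofic_no_nontrivial_idempotent.
- by move/(no_nontrivial_idempotent_group monoidM)/(group_strongly_sofic R monoidM).
Qed.
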